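(* Let $C=(c_{k,j})\in\mathbb{R}_{\max}^{p\times n}$, $\mu^+\in\mathbb{Z}_{\ge0}^p$, $\mu^-\in\mathbb{Z}_{\ge0}^n$ with $\sum_{k\in[p]}\mu^+_k=\sum_{j\in[n]}\mu^-_j$, and $f(x)=\sum_{k=1}^p\mu^+_k\max_{j\in[n]}(c_{k,j}+x_j)-\sum_{j=1}^n\mu^-_jx_j$. Then: (1) $f(\alpha\otimes x)=f(x)$ for any $x\in\mathbb{R}_{\max}^n$ and $\alpha\in\mathbb{R}$; (2) $f(x)+f(y)\ge f(x\oplus y)+f(x\oplus' y)$ for any $x,y\in\mathbb{R}_{\max}^n$.
   Context: $\mathbb{R}_{\max}=\mathbb{R}\cup\{-\infty\}$; $\alpha\otimes x$ is the vector with entries $\alpha+x_j$; $x\oplus y$ and $x\oplus' y$ are the entrywise maximum and minimum of $x$ and $y$. The identities are understood for vectors on which $f$ is well defined. *)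

From HB Require Import structures.
From mathcomp Require Import all_boot all_order all_algebra.
From mathcomp Require Import all_classical all_reals ereal.
Set Implicit Arguments. Unset Strict Implicit. Unset Printing Implicit Defensive.
Import Order.TTheory GRing.Theory Num.Theory.
Local Open Scope ring_scope.
Local Open Scope ereal_scope.

(* R_max = R ∪ {-oo} is modelled inside \bar R by the elements different from +oo. *)
Definition Rmax_elt (R : realType) (e : \bar R) : Prop := e != +oo.

Definition tscal (R : realType) (n : nat) (a : R) (x : 'I_n -> \bar R) : 'I_n -> \bar R :=
  fun j => a%:E + x j.
Definition tmax (R : realType) (n : nat) (x y : 'I_n -> \bar R) : 'I_n -> \bar R :=
  fun j => maxe (x j) (y j).
Definition tmin (R : realType) (n : nat) (x y : 'I_n -> \bar R) : 'I_n -> \bar R :=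
  fun j => mine (x j) (y j).

(* positive part  sum_k mu+_k max_j (c_{k,j} + x_j)  (in R ∪ {-oo}; 0 * -oo = 0) *)
Definition fpos (R : realType) (p n : nat) (C : 'I_p -> 'I_n -> \bar R)
  (mup : 'I_p -> nat) (x : 'I_n -> \bar R) : \bar R :=
  \sum_(k < p) ((mup k)%:R)%:E * (\big[maxe/-oo]_(j < n) (C k j + x j)).

Definition fneg (R : realType) (n : nat) (mum : 'I_n -> nat) (x : 'I_n -> \bar R) : \bar R :=
  \sum_(j < n) ((mum j)%:R)%:E * x j.

Definition ftrop (R : realType) (p n : nat) (C : 'I_p -> 'I_n -> \bar R)
  (mup : 'I_p -> nat) (mum : 'I_n -> nat) (x : 'I_n -> \bar R) : \bar R :=
  fpos C mup x - fneg mum x.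

(* f(x) is well defined: it is not of the form (-oo) - (-oo), i.e. the
   expansion does not contain both a -oo term and a +oo term. *)
Definition f_welldef (R : realType) (p n : nat) (C : 'I_p -> 'I_n -> \bar R)
  (mup : 'I_p -> nat) (mum : 'I_n -> nat) (x : 'I_n -> \bar R) : Prop :=
  ~ (fpos C mup x = -oo /\ fneg mum x = -oo).

From HB Require Import structures.
From mathcomp Require Import all_boot all_order all_algebra.
From mathcomp Require Import all_classical all_reals ereal.
Import Order.TTheory GRing.Theory Num.Theory.
Local Open Scope ring_scope.
Local Open Scope ereal_scope.

(* Each tropical form g_k(x) = max_j (c_kj + x_j) commutes with shifts by alpha,
   distributes over (+) and is monotone, so g_k(x (+) y) = max (g_k x) (g_k y) and
   g_k(x (+)' y) <= min (g_k x) (g_k y); as max u v + min u v = u + v, each g_k is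
   submodular, while the linear part sum_j mu-_j x_j is modular.  Nonnegative
   weights keep these properties, and a shift by alpha moves both parts by the
   same amount (sum mu+) alpha = (sum mu-) alpha. *)

Section ExtendedRealFacts.
Variable R : realType.
Implicit Types (a u v x y : \bar R).

Lemma adde_max_min x y : maxe x y + mine x y = x + y.
Proof. by rewrite maxEle minEle; case: ifP => // _; rewrite addeC. Qed.

Lemma addeKB (c : R) x y : (c%:E + x) - (c%:E + y) = x - y.
Proof. by rewrite oppeD // addeACA subee // add0e. Qed.

Lemma leeDB2 a b c d u v x y : u +? v -> x +? y ->
  c + d <= a + b -> x + y = u + v -> (c - x) + (d - y) <= (a - u) + (b - v).
Proof.
by move=> uv xy cdab xyuv; rewrite (addeACA c) (addeACA a) -!oppeD // xyuv leeD2r.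
Qed.

Lemma bigmaxeDl I (r : seq I) a (F : I -> \bar R) :
  \big[maxe/-oo]_(i <- r) (a + F i) = a + \big[maxe/-oo]_(i <- r) F i.
Proof.
apply/esym/(big_morph (adde a)) => [u v|]; [exact: adde_maxr|exact: addeNy].
Qed.

Lemma le_bigmaxe I (r : seq I) (F G : I -> \bar R) : (forall i, F i <= G i) ->
  \big[maxe/-oo]_(i <- r) F i <= \big[maxe/-oo]_(i <- r) G i.
Proof.
move=> FG; elim: r => [|i r IH]; rewrite ?big_nil ?big_cons //.
exact: le_max2.
Qed.

End ExtendedRealFacts.

Section TropicalFunction.
Variables (R : realType) (p n : nat) (C : 'I_p -> 'I_n -> \bar R).
Variables (mup : 'I_p -> nat) (mum : 'I_n -> nat).
Implicit Types x y : 'I_n -> \bar R.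

Lemma fpos_tscal a x :
  fpos C mup (tscal a x) = ((\sum_k mup k)%:R * a)%:E + fpos C mup x.
Proof.
rewrite /fpos natr_sum mulr_suml -sumEFin -big_split /=; apply: eq_bigr => k _.
under eq_bigr do rewrite /tscal addeCA.
by rewrite bigmaxeDl muleDr ?fin_num_adde_defr // EFinM.
Qed.

Lemma fneg_tscal a x :
  fneg mum (tscal a x) = ((\sum_j mum j)%:R * a)%:E + fneg mum x.
Proof.
rewrite /fneg natr_sum mulr_suml -sumEFin -big_split /=; apply: eq_bigr => j _.
by rewrite /tscal muleDr ?fin_num_adde_defr // EFinM.
Qed.

Lemma ftrop_tscal a x : (\sum_k mup k = \sum_j mum j)%N ->
  ftrop C mup mum (tscal a x) = ftrop C mup mum x.
Proof. by move=> mu_eq; rewrite /ftrop fpos_tscal fneg_tscal mu_eq addeKB. Qed.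

Lemma bigmaxe_tmax k x y :
  \big[maxe/-oo]_(j < n) (C k j + tmax x y j) =
  maxe (\big[maxe/-oo]_(j < n) (C k j + x j)) (\big[maxe/-oo]_(j < n) (C k j + y j)).
Proof. by under eq_bigr do rewrite /tmax adde_maxr; exact: bigmax_split. Qed.

Lemma fpos_submodular x y :
  fpos C mup (tmax x y) + fpos C mup (tmin x y) <= fpos C mup x + fpos C mup y.
Proof.
rewrite /fpos -!big_split /=; apply: lee_sum => k _.
have mk_ge0 : 0 <= ((mup k)%:R)%:E :> \bar R by rewrite lee_fin.
rewrite bigmaxe_tmax maxe_pMr // -[leRHS]adde_max_min -mine_pMr //.
apply: leeD2l; apply: lee_wpmul2l => //; rewrite le_min; apply/andP.
by split; apply: le_bigmaxe => j; rewrite leeD2l // /tmin ge_min lexx ?orbT.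
Qed.

Lemma fneg_modular x y :
  fneg mum (tmax x y) + fneg mum (tmin x y) = fneg mum x + fneg mum y.
Proof.
rewrite /fneg -!big_split /=; apply: eq_bigr => j _.
by rewrite /tmax /tmin maxe_pMr // mine_pMr // adde_max_min.
Qed.

Lemma fneg_lty x : (forall j, x j < +oo) -> fneg mum x < +oo.
Proof. by move=> x_lty; apply: lte_sum_pinfty => j _; apply: lte_mul_pinfty. Qed.

Lemma ftrop_submodular x y : (forall j, x j < +oo) -> (forall j, y j < +oo) ->
  ftrop C mup mum (tmax x y) + ftrop C mup mum (tmin x y) <=
  ftrop C mup mum x + ftrop C mup mum y.
Proof.
move=> x_lty y_lty.
have tmax_lty j : tmax x y j < +oo by rewrite gt_max x_lty y_lty.
have tmin_lty j : tmin x y j < +oo by rewrite gt_min x_lty.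
apply: leeDB2; [| |exact: fpos_submodular|exact: fneg_modular];
  by apply: ltpinfty_adde_def; rewrite inE; apply: fneg_lty.
Qed.

End TropicalFunction.

Theorem corollary3p2 (R : realType) (p n : nat) (C : 'I_p -> 'I_n -> \bar R)
  (mup : 'I_p -> nat) (mum : 'I_n -> nat) :
  (forall k j, Rmax_elt (C k j)) ->
  (\sum_(k < p) mup k = \sum_(j < n) mum j)%N ->
  (forall (x : 'I_n -> \bar R) (a : R),
      (forall j, Rmax_elt (x j)) ->
      f_welldef C mup mum x ->
      ftrop C mup mum (tscal a x) = ftrop C mup mum x) /\
  (forall x y : 'I_n -> \bar R,
      (forall j, Rmax_elt (x j)) -> (forall j, Rmax_elt (y j)) ->
      f_welldef C mup mum x -> f_welldef C mup mum y ->
      f_welldef C mup mum (tmax x y) -> f_welldef C mup mum (tmin x y) ->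
      ftrop C mup mum x + ftrop C mup mum y >=
      ftrop C mup mum (tmax x y) + ftrop C mup mum (tmin x y)).
Proof.
move=> _ mu_eq; split=> [x a _ _ | x y x_fin y_fin _ _ _ _].
  exact: ftrop_tscal.
by apply: ftrop_submodular => j; rewrite ltey; [exact: x_fin | exact: y_fin].
Qed.
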